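(* There exists a family $(C_n)_{n\ge1}$, where $C_n$ is a circuit on $n$ qubits composed of controlled-not gates and one-qubit diagonal gates, with the following property: for every polynomial $p$ there is a polynomial $q$ such that for all $n$, every quantum circuit in which the operator computed by $C_n$ is embedded using at most $p(n)$ ancillae has depth at least $2^n/q(n)$. In other words, these circuits cannot be parallelized to less than exponential depth with a polynomial number of ancillae.
   Context: Qubits have computational basis $|0\rangle,|1\rangle$. The controlled-not gate is $|a,b\rangle\mapsto|a,a\oplus b\rangle$; a one-qubit diagonal gate is $\mathrm{diag}(e^{i\alpha},e^{i\beta})$ on a single qubit. A one-layer circuit is a tensor product of arbitrary one-qubit and two-qubit unitary gates acting on pairwise disjoint sets of qubits; a quantum circuit of depth $d$ is a product of $d$ one-layer circuits. An operator $F$ on $n$ qubits is embedded in an operator $M$ on $n+m$ qubits using $m$ ancillae if $M(|\psi\rangle\otimes|0\cdots0\rangle)=(F|\psi\rangle)\otimes|0\cdots0\rangle$ for all $|\psi\rangle$. *)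

From HB Require Import structures.
From mathcomp Require Import all_boot all_order all_algebra.
From mathcomp Require Import complex.
From mathcomp Require Import reals.
From Stdlib Require List.
Set Implicit Arguments. Unset Strict Implicit. Unset Printing Implicit Defensive.
Import Order.TTheory GRing.Theory Num.Theory.
Local Open Scope ring_scope.

Section Quantum.
Variable R : realType.
Notation C := (R[i]).

Definition basis (N : nat) := {ffun 'I_N -> bool}.
Definition op (N : nat) := basis N -> basis N -> C.
Definition vec (N : nat) := basis N -> C.

Definition opmul N (A B : op N) : op N :=
  fun x y => \sum_(z : basis N) A x z * B z y.
Definition opid N : op N := fun x y => (x == y)%:R.
Definition opapp N (A : op N) (v : vec N) : vec N :=
  fun x => \sum_(y : basis N) A x y * v y.

Definition unitary k (U : 'M[C]_k) : Prop :=
  U *m (map_mx (fun z : C => z^*) U)^T = 1%:M.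

Definition bidx (b : bool) : 'I_2 := if b then ord_max else ord0.
Definition bidx2 (a b : bool) : 'I_4 := inord (2 * a + b)%N.

Inductive gate (N : nat) :=
| Gate1 of 'I_N & 'M[C]_2
| Gate2 of 'I_N & 'I_N & 'M[C]_4.

Definition gate_support N (g : gate N) : seq 'I_N :=
  match g with Gate1 i _ => [:: i] | Gate2 i j _ => [:: i; j] end.

Definition gate_ok N (g : gate N) : Prop :=
  match g with
  | Gate1 _ U => unitary U
  | Gate2 i j U => i <> j /\ unitary U
  end.

Definition agree_off N (s : seq 'I_N) (x y : basis N) : C :=
  (\prod_(k : 'I_N | k \notin s) (x k == y k)%:R).

Definition gate_op N (g : gate N) : op N :=
  match g with
  | Gate1 i U => fun x y => agree_off [:: i] x y * U (bidx (x i)) (bidx (y i))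
  | Gate2 i j U => fun x y =>
      agree_off [:: i; j] x y * U (bidx2 (x i) (x j)) (bidx2 (y i) (y j))
  end.

(* a one-layer circuit: gates acting on pairwise disjoint sets of qubits
   (qubits not touched carry the identity) *)
Definition layer (N : nat) := seq (gate N).
Definition layer_ok N (l : layer N) : Prop :=
  (forall g, List.In g l -> gate_ok g) /\ uniq (flatten (map (@gate_support N) l)).
Definition layer_op N (l : layer N) : op N := foldr (@opmul N) (@opid N) (map (@gate_op N) l).

Definition has_depth_circuit N (d : nat) (M : op N) : Prop :=
  exists ls : seq (layer N),
    size ls = d /\ (forall l, List.In l ls -> layer_ok l) /\
    forall x y, M x y = foldr (@opmul N) (@opid N) (map (@layer_op N) ls) x y.

Inductive cd_gate (n : nat) :=
| CNOT of 'I_n & 'I_n          (* control, target *)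
| Diag of 'I_n & C & C.        (* diag(a, b) with |a| = |b| = 1 *)

Definition cd_gate_ok n (g : cd_gate n) : Prop :=
  match g with
  | CNOT c t => c <> t
  | Diag _ a b => `|a| = 1 /\ `|b| = 1
  end.

Definition flip_at n (t : 'I_n) (v : bool) (x : basis n) : basis n :=
  [ffun k => if k == t then x k (+) v else x k].

Definition cd_gate_op n (g : cd_gate n) : op n :=
  match g with
  | CNOT c t => fun x y => (x == flip_at t (y c) y)%:R
  | Diag i a b => fun x y => (x == y)%:R * (if y i then b else a)
  end.

(* a circuit applies its gates in order: operator = g_k ... g_1 *)
Definition cd_circuit_op n (gs : seq (cd_gate n)) : op n :=
  foldl (fun acc g => opmul (cd_gate_op g) acc) (@opid n) gs.

(* |psi> (x) |0...0> on n + m qubits *)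
Definition with_ancillae n m (psi : vec n) : vec (n + m) :=
  fun x => psi [ffun i : 'I_n => x (lshift m i)] *
           (\prod_(j : 'I_m) (~~ x (rshift n j))%:R).

Definition embeds n m (F : op n) (M : op (n + m)) : Prop :=
  forall psi : vec n,
    forall x, opapp M (@with_ancillae n m psi) x = @with_ancillae n m (opapp F psi) x.

End Quantum.

(* Choose the phases of C_n so that the numbers w_S := z_S^(-2^(n-1)), one for
   each subset S of the last n-1 qubits, are algebraically independent over Q
   and of modulus 1 (each new one only has to avoid the roots of countably many
   polynomials).  C_n multiplies |y> by the product of the z_S over the S whose
   parity y_0 + sum_(i in S) y_i is odd, and a character-orthogonality argument
   recovers each w_S as a product of these diagonal entries and their
   conjugates.  An embedding circuit of depth d on L qubits has the same
   diagonal entries, and all its entries are rational polynomials in its at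
   most 16 L d gate entries.  So the 2^(n-1) independent w_S lie in the
   Q-algebra generated by 32 L d numbers, which by counting monomials forces
   2^(n-1) <= 32 L d. *)

From HB Require Import structures.
From mathcomp Require Import all_boot all_order all_algebra.
From mathcomp Require Import complex reals.
From mathcomp Require Import boolp.
From mathcomp Require classical_sets cardinality ereal measure lebesgue_measure.
From mathcomp Require Import zify lra.
From Stdlib Require List.
Set Implicit Arguments. Unset Strict Implicit. Unset Printing Implicit Defensive.
Import Order.TTheory GRing.Theory Num.Theory.
Local Open Scope ring_scope.

Section RatPoly.
Variables (F : numFieldType) (P : pred F).

(* a monomial is the list of its factors; [E] bounds the total degree *)
Definition ratpoly_in (E : nat) (x : F) :=
  exists s : seq (rat * seq F),
    all (fun p => all P p.2 && (size p.2 <= E)%N) s /\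
    x = \sum_(p <- s) ratr p.1 * \prod_(a <- p.2) a.

Lemma ratpoly_in_leq E E' x : (E <= E')%N -> ratpoly_in E x -> ratpoly_in E' x.
Proof.
move=> le [s [Hs ->]]; exists s; split=> //.
by apply/allP=> p /(allP Hs) /andP[-> /leq_trans]; apply.
Qed.

Lemma ratpoly_in0 E : ratpoly_in E 0.
Proof. by exists [::]; rewrite big_nil. Qed.

Lemma ratpoly_in_rat q : ratpoly_in 0 (ratr q).
Proof. by exists [:: (q, [::])]; rewrite //= big_seq1 big_nil mulr1. Qed.

Lemma ratpoly_in_nat k : ratpoly_in 0 k%:R.
Proof. by rewrite -ratr_nat; apply: ratpoly_in_rat. Qed.

Lemma ratpoly_in1 : ratpoly_in 0 1.
Proof. exact: ratpoly_in_nat 1. Qed.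

Lemma ratpoly_in_var a : P a -> ratpoly_in 1 a.
Proof.
move=> Pa; exists [:: (1, [:: a])]; split; first by rewrite /= Pa.
by rewrite !big_seq1 rmorph1 mul1r.
Qed.

Lemma ratpoly_inD E x y : ratpoly_in E x -> ratpoly_in E y -> ratpoly_in E (x + y).
Proof.
move=> [s [Hs ->]] [t [Ht ->]]; exists (s ++ t).
by rewrite all_cat Hs Ht big_cat.
Qed.

Lemma ratpoly_inM E1 E2 x y :
  ratpoly_in E1 x -> ratpoly_in E2 y -> ratpoly_in (E1 + E2) (x * y).
Proof.
move=> [s [Hs ->]] [t [Ht ->]].
exists [seq (p.1 * q.1, p.2 ++ q.2) | p <- s, q <- t]; split.
  apply/allP=> r /allpairsP[[p q] [/= /(allP Hs) /andP[Pp Sp] /(allP Ht) /andP[Pq Sq] ->]].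
  by rewrite /= all_cat Pp Pq size_cat leq_add.
rewrite big_allpairs_dep /= big_distrl /=; apply: eq_bigr => p _.
rewrite big_distrr /=; apply: eq_bigr => q _.
by rewrite rmorphM big_cat /= mulrACA.
Qed.

Lemma ratpoly_in_sum (I : Type) (r : seq I) E (G : I -> F) :
  (forall i, ratpoly_in E (G i)) -> ratpoly_in E (\sum_(i <- r) G i).
Proof.
move=> HG; elim: r => [|i r IH]; first by rewrite big_nil; apply: ratpoly_in0.
by rewrite big_cons; apply: ratpoly_inD.
Qed.

Lemma ratpoly_in_prod (I : Type) (r : seq I) (Es : I -> nat) (G : I -> F) :
  (forall i, ratpoly_in (Es i) (G i)) ->
  ratpoly_in (\sum_(i <- r) Es i)%N (\prod_(i <- r) G i).
Proof.
move=> HG; elim: r => [|i r IH]; first by rewrite !big_nil; apply: ratpoly_in1.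
by rewrite !big_cons; apply: ratpoly_inM.
Qed.

Lemma ratpoly_inX E k x : ratpoly_in E x -> ratpoly_in (k * E) (x ^+ k).
Proof.
move=> Hx; elim: k => [|k IH]; first by rewrite expr0; apply: ratpoly_in1.
by rewrite exprS mulSn; apply: ratpoly_inM.
Qed.

Lemma ratpoly_in_rmorph (f : {rmorphism F -> F}) E x :
  {homo f : a / P a} -> ratpoly_in E x -> ratpoly_in E (f x).
Proof.
move=> fP [s [Hs ->]]; exists [seq (p.1, map f p.2) | p <- s]; split.
  rewrite all_map; apply/allP=> p /(allP Hs) /andP[Pp Sp] /=.
  rewrite all_map size_map Sp andbT; apply/allP=> a /(allP Pp); exact: fP.
rewrite rmorph_sum big_map; apply: eq_bigr => p _ /=.
by rewrite rmorphM fmorph_rat rmorph_prod big_map.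
Qed.

End RatPoly.

Lemma exists_lin_dep (K : fieldType) (A B : finType) (co : A -> B -> K) :
  (#|B| < #|A|)%N ->
  exists2 c : A -> K, exists al, c al != 0 & forall b, \sum_al c al * co al b = 0.
Proof.
move=> ltBA.
pose Mx : 'M[K]_(#|A|, #|B|) := \matrix_(i, j) co (enum_val i) (enum_val j).
have nfree : ~~ row_free Mx.
  by rewrite -row_leq_rank -ltnNge (leq_ltn_trans (rank_leq_col _)).
have [v vM v0] : exists2 v : 'rV_#|A|, v *m Mx = 0 & v != 0.
  apply: contrapT => nov; move/negP: nfree; apply; apply: inj_row_free => v vM.
  by apply: contrapT => /eqP v0; apply: nov; exists v.
have [j vj] : exists j, v 0 j != 0.
  apply: contrapT => /forallNP vj; case/eqP: v0.
  by apply/rowP => j; rewrite mxE; apply/eqP/negPn/negP.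
exists (fun al => v 0 (enum_rank al)); first by exists (enum_val j); rewrite enum_valK.
move=> b; have := congr1 (fun u : 'rV_#|B| => u 0 (enum_rank b)) vM.
rewrite !mxE /= (reindex enum_rank) /=; last exact/onW_bij/enum_rank_bij.
by under eq_bigr do rewrite mxE !enum_rankK.
Qed.

Section MonomialCoordinates.
Variables (F : numFieldType) (vs : seq F).
Hypothesis vs_uniq : uniq vs.

Lemma prod_seq_count_mem (ms : seq F) : all (mem vs) ms ->
  \prod_(a <- ms) a = \prod_(i < size vs) vs`_i ^+ count_mem vs`_i ms.
Proof.
move=> msvs; rewrite -(prodr_undup_exp_count ms predT id) /=.
rewrite -(big_mkord predT (fun i => vs`_i ^+ count_mem vs`_i ms)).
rewrite -(big_nth 0 predT (fun a => a ^+ count_mem a ms)).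
rewrite [RHS](bigID (mem ms)) /= [X in _ * X]big1 ?mulr1; last first.
  by move=> a /count_memPn ->; rewrite expr0.
rewrite -[RHS]big_filter; apply: perm_big; apply: uniq_perm.
- exact: undup_uniq.
- exact: filter_uniq.
move=> a; rewrite mem_undup mem_filter /=.
by case msa: (a \in ms) => //=; move: (allP msvs a msa).
Qed.

Lemma ratpoly_in_monomial_coords E x : ratpoly_in (mem vs) E x ->
  exists co : {ffun 'I_(size vs) -> 'I_E.+1} -> rat,
    x = \sum_b ratr (co b) * \prod_(i < size vs) vs`_i ^+ b i.
Proof.
move=> [s [Hs ->]].
pose mono (b : {ffun 'I_(size vs) -> 'I_E.+1}) := \prod_(i < size vs) vs`_i ^+ b i.
pose key (ms : seq F) : {ffun 'I_(size vs) -> 'I_E.+1} :=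
  [ffun i : 'I_(size vs) => inord (count_mem vs`_i ms)].
have monoE ms : all (mem vs) ms -> (size ms <= E)%N -> \prod_(a <- ms) a = mono (key ms).
  move=> msvs Sms; rewrite prod_seq_count_mem //; apply: eq_bigr => i _.
  by rewrite ffunE inordK // ltnS (leq_trans (count_size _ _)).
exists (fun b => \sum_(p <- s | key p.2 == b) p.1).
transitivity (\sum_(p <- s) \sum_(b | key p.2 == b) ratr p.1 * mono b).
  rewrite big_seq_cond [RHS]big_seq_cond; apply: eq_bigr => p /andP[ps _].
  have /andP[Pp Sp] := allP Hs p ps.
  by rewrite (big_pred1 (key p.2)) ?monoE // => b; rewrite eq_sym.
rewrite (exchange_big_dep xpredT) //=; apply: eq_bigr => b _.
by rewrite rmorph_sum big_distrl.
Qed.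

Lemma ratpoly_in_lin_dep E (A : finType) (X : A -> F) :
  (forall al, ratpoly_in (mem vs) E (X al)) -> (E.+1 ^ size vs < #|A|)%N ->
  exists2 c : A -> rat, exists al, c al != 0 & \sum_al ratr (c al) * X al = 0.
Proof.
move=> HX ltA.
have [co coE] := choice (fun al => ratpoly_in_monomial_coords (HX al)).
have [|c c0 cco] := @exists_lin_dep _ A _ co; first by rewrite card_ffun !card_ord.
exists c => //.
under eq_bigr do rewrite coE big_distrr /=.
rewrite exchange_big /=; apply: big1 => b _.
under eq_bigr do rewrite mulrA -rmorphM.
by rewrite -big_distrl -rmorph_sum /= cco rmorph0 mul0r.
Qed.

End MonomialCoordinates.

Section AlgIndependence.
Variable F : numFieldType.

(* Algebraic independence over Q; bounding the exponents by [D] keeps each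
   family of monomials finite. *)
Definition alg_independent K (w : 'I_K -> F) :=
  forall D (c : {ffun 'I_K -> 'I_D.+1} -> rat),
    \sum_al ratr (c al) * \prod_i w i ^+ al i = 0 -> forall al, c al = 0.

Lemma alg_independent0 (w : 'I_0 -> F) : alg_independent w.
Proof.
move=> D c + al; rewrite (big_pred1 al) => [|al']; last first.
  by apply/esym/eqP/ffunP; case.
by rewrite big_ord0 mulr1 => /eqP; rewrite fmorph_eq0 => /eqP.
Qed.

Lemma alg_independent_card K (w : 'I_K -> F) (vs : seq F) E :
  uniq vs -> alg_independent w -> (forall i, ratpoly_in (mem vs) E (w i)) ->
  (K <= size vs)%N.
Proof.
move=> vs_uniq w_indep wE; rewrite leqNgt; apply/negP => ltNK.
set N := size vs in ltNK; set c0 := (K * E)%N; set D := (c0.+1 ^ N)%N.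
have monoE (al : {ffun 'I_K -> 'I_D.+1}) :
    ratpoly_in (mem vs) (D * c0) (\prod_i w i ^+ al i).
  apply: ratpoly_in_leq _ (ratpoly_in_prod _ (fun i => ratpoly_inX (al i) (wE i))).
  apply: (@leq_trans (\sum_(i < K) D * E)%N).
    by apply: leq_sum => i _; rewrite leq_mul2r -ltnS ltn_ord orbT.
  by rewrite sum_nat_const card_ord mulnCA.
(* [D] is large enough for the [(D + 1) ^ K] monomials in the [w i] to outnumber
   the coordinates of polynomials of degree [D * c0] in [vs] *)
have count : ((D * c0).+1 ^ N < #|{ffun 'I_K -> 'I_D.+1}|)%N.
  rewrite card_ffun !card_ord.
  have le_base : ((D * c0).+1 ^ N <= (D.+1 * c0.+1) ^ N)%N.
    by case: (posnP N) => [->|N0] //; rewrite leq_exp2r //; nia.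
  apply: leq_ltn_trans le_base _; rewrite expnMn -/D.
  apply: (@leq_trans (D.+1 ^ N.+1)); last exact: leq_pexp2l.
  by rewrite expnSr ltn_mul2l ltnS leqnn expn_gt0.
have [c [al cal] csum] := ratpoly_in_lin_dep vs_uniq monoE count.
by move/eqP: cal; apply; apply: w_indep csum al.
Qed.

End AlgIndependence.

Module UnitInterval.
Import classical_sets cardinality ereal measure lebesgue_measure.

Lemma exists_unit_interval_notin (R : realType) (ts : nat -> seq R) :
  exists r : R, [/\ 0 <= r, r <= 1 & forall k, r \notin ts k].
Proof.
pose U := (\bigcup_k [set` ts k])%classic.
have cU : countable U.
  by apply: bigcup_countable => // k _; exact/finite_set_countable/finite_seq.
apply: contrapT => hU.
have sub : (`[(0:R), 1] `<=` U)%classic.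
  move=> x /=; rewrite in_itv /= => /andP[x0 x1].
  apply: contrapT => nU; apply: hU; exists x; split=> // k.
  by apply/negP => xk; apply: nU; exists k.
have := subset_measure0 (mu := lebesgue_measure) (measurable_itv `[(0:R), 1]%R)
  (countable_measurable (@measurable_set1 R) cU) sub (countable_lebesgue_measure0 cU).
move=> U0; have := lebesgue_measure_itv `[(0:R), 1]%R.
rewrite U0 /= lte_fin ltr01 -EFinB subr0.
by move/eqP; rewrite eq_sym eqe oner_eq0.
Qed.

End UnitInterval.
Import UnitInterval.

Section UnitCircle.
Variable R : realType.
Notation C := R[i].

Definition root_seq (Q : {poly C}) : seq C :=
  if Q == 0 then [::] else sval (closed_field_poly_normal Q).

Lemma root_seqP Q y : Q != 0 -> root Q y -> y \in root_seq Q.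
Proof.
move=> Q0; rewrite /root_seq (negbTE Q0).
case: (closed_field_poly_normal Q) => rs /= ->.
rewrite rootZ ?lead_coef_eq0 // root_prod_XsubC; exact.
Qed.

Definition extend K (w : 'I_K -> C) (y : C) : 'I_K.+1 -> C :=
  fun i => if unlift ord0 i is Some j then w j else y.

Definition coef_family K D := {ffun 'I_D.+1 * {ffun 'I_K -> 'I_D.+1} -> rat}.

(* a rational relation [c] among the [extend w y] is a root [y] of some
   [lift_poly w cc] *)
Definition lift_poly K (w : 'I_K -> C) D (cc : coef_family K D) : {poly C} :=
  \sum_(t < D.+1)
    (\sum_(g : {ffun 'I_K -> 'I_D.+1}) ratr (cc (t, g)) * \prod_i w i ^+ g i) *: 'X^t.

Lemma alg_independent_extend K (w : 'I_K -> C) y :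
  alg_independent w ->
  (forall D (cc : coef_family K D), lift_poly w cc != 0 -> ~~ root (lift_poly w cc) y) ->
  alg_independent (extend w y).
Proof.
move=> w_indep y_transc D c c_rel.
pose join_exp (p : 'I_D.+1 * {ffun 'I_K -> 'I_D.+1}) : {ffun 'I_K.+1 -> 'I_D.+1} :=
  [ffun i => if unlift ord0 i is Some j then p.2 j else p.1].
pose split_exp (al : {ffun 'I_K.+1 -> 'I_D.+1}) := (al ord0, [ffun j => al (lift ord0 j)]).
have join_expK : cancel split_exp join_exp.
  move=> al; apply/ffunP => i; rewrite ffunE /=.
  by case: unliftP => [j ->|->]; rewrite ?ffunE.
have split_expK : cancel join_exp split_exp.
  move=> [t g]; rewrite /split_exp /= ffunE unlift_none; congr pair.
  by apply/ffunP => j; rewrite !ffunE liftK.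
pose cc : coef_family K D := [ffun p => c (join_exp p)].
have Qy : root (lift_poly w cc) y.
  rewrite /root -c_rel (reindex join_exp) /=; last first.
    by exists split_exp => p _; [exact: split_expK|exact: join_expK].
  rewrite /lift_poly horner_sum; apply/eqP.
  transitivity (\sum_t \sum_g
      ratr (c (join_exp (t, g))) * \prod_i extend w y i ^+ join_exp (t, g) i);
    last by rewrite pair_big; apply: eq_bigr => -[].
  apply: eq_bigr => t _.
  rewrite hornerZ hornerXn big_distrl /=; apply: eq_bigr => g _.
  rewrite big_ord_recl /extend /= !ffunE unlift_none -mulrA; congr (_ * _).
  rewrite mulrC; congr (_ * _); apply: eq_bigr => j _.
  by rewrite liftK ffunE liftK.
have Q0 : lift_poly w cc = 0 by apply: contraTeq Qy; exact: y_transc.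
move=> al; rewrite -(join_expK al).
have := w_indep D (fun g => cc (al ord0, g)) _ [ffun j => al (lift ord0 j)].
rewrite ffunE; apply.
have := congr1 (fun Q : {poly C} => Q`_(al ord0)) Q0.
rewrite coef0 /lift_poly coef_sum (bigD1 (al ord0)) //= coefZ coefXn eqxx mulr1.
rewrite [X in _ + X]big1 ?addr0 // => t tal.
by rewrite coefZ coefXn eq_sym (negbTE (tal : t != al ord0 :> nat)) mulr0.
Qed.

Lemma alg_independent_extend_unit K (w : 'I_K -> C) :
  alg_independent w -> exists2 y : C, `|y| = 1 & alg_independent (extend w y).
Proof.
move=> w_indep.
(* [Re y] avoids the roots of the countably many polynomials [lift_poly w cc] *)
pose roots_at k := if (unpickle k : option {D & coef_family K D}) is Some (existT D cc)
  then map (@complex.Re R) (root_seq (lift_poly w cc)) else [::].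
have [r [r0 r1 r_notin]] := exists_unit_interval_notin roots_at.
have r2 : 0 <= 1 - r ^+ 2 by rewrite subr_ge0 expr_le1.
exists (Complex r (Num.sqrt (1 - r ^+ 2))).
  by rewrite normc_def /= sqr_sqrtr // addrC subrK sqrtr1.
apply: alg_independent_extend => // D cc Q0; apply/negP => /(root_seqP Q0) Qy.
have := r_notin (pickle (existT (fun D => coef_family K D) D cc)).
by rewrite /roots_at pickleK (map_f (@complex.Re R) Qy).
Qed.

Lemma exists_alg_independent_unit K :
  exists2 w : 'I_K -> C, forall i, `|w i| = 1 & alg_independent w.
Proof.
elim: K => [|K [w w1 w_indep]].
  by exists (fun _ => 1) => [_|]; [exact: normr1|exact: alg_independent0].
have [y y1 wy_indep] := alg_independent_extend_unit w_indep.
by exists (extend w y) => // i; rewrite /extend; case: unlift.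
Qed.

End UnitCircle.

Section CnotDiagCircuits.
Variable R : realType.
Notation C := R[i].

Definition cd_act n (g : cd_gate R n) (u : basis n) : basis n :=
  match g with CNOT c t => flip_at t (u c) u | Diag _ _ _ => u end.

Definition cd_phase n (g : cd_gate R n) (u : basis n) : C :=
  match g with CNOT _ _ => 1 | Diag i a b => if u i then b else a end.

Definition cd_run n (gs : seq (cd_gate R n)) u := foldl (fun u g => cd_act g u) u gs.

Fixpoint cd_circuit_phase n (gs : seq (cd_gate R n)) u : C :=
  if gs is g :: gs' then cd_phase g u * cd_circuit_phase gs' (cd_act g u) else 1.

Lemma cd_gate_opE n (g : cd_gate R n) x u :
  cd_gate_op g x u = (x == cd_act g u)%:R * cd_phase g u.
Proof. by case: g => [c t|i a b] /=; rewrite ?mulr1. Qed.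

Lemma cd_foldl_opE n (gs : seq (cd_gate R n)) (pi : basis n -> basis n)
    (ph : basis n -> C) (acc : op R n) :
  (forall x y, acc x y = (x == pi y)%:R * ph y) ->
  forall x y, foldl (fun acc g => opmul (cd_gate_op g) acc) acc gs x y =
    (x == cd_run gs (pi y))%:R * (ph y * cd_circuit_phase gs (pi y)).
Proof.
elim: gs pi ph acc => [|g gs IH] pi ph acc accE x y /=; first by rewrite accE mulr1.
rewrite (IH (fun y => cd_act g (pi y)) (fun y => ph y * cd_phase g (pi y))) ?mulrA //.
move=> x' y'; rewrite /opmul (bigD1 (pi y')) //= big1 ?addr0.
  by rewrite accE eqxx mul1r cd_gate_opE -mulrA [cd_phase _ _ * _]mulrC.
by move=> u /negbTE uy; rewrite accE uy mul0r mulr0.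
Qed.

Lemma cd_circuit_opE n (gs : seq (cd_gate R n)) x y :
  cd_circuit_op gs x y = (x == cd_run gs y)%:R * cd_circuit_phase gs y.
Proof.
rewrite /cd_circuit_op (@cd_foldl_opE n gs id (fun _ => 1)) ?mul1r //.
by move=> x' y'; rewrite /opid mulr1.
Qed.

Lemma cd_run_cat n (gs1 gs2 : seq (cd_gate R n)) u :
  cd_run (gs1 ++ gs2) u = cd_run gs2 (cd_run gs1 u).
Proof. exact: foldl_cat. Qed.

Lemma cd_circuit_phase_cat n (gs1 gs2 : seq (cd_gate R n)) u :
  cd_circuit_phase (gs1 ++ gs2) u =
  cd_circuit_phase gs1 u * cd_circuit_phase gs2 (cd_run gs1 u).
Proof. by elim: gs1 u => [|g gs IH] u /=; rewrite ?mul1r // IH mulrA. Qed.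

End CnotDiagCircuits.

Section ParityPhaseCircuit.
Variables (R : realType) (n' : nat).
Notation C := R[i].
Notation n := n'.+1.
Notation mask := {ffun 'I_n' -> bool}.

Definition parity (S : mask) (y : basis n) : bool :=
  \big[addb/false]_(i | S i) y (lift ord0 i).

Definition chi (S : mask) (y : basis n) : bool := y ord0 (+) parity S y.

Definition cnots (l : seq 'I_n') : seq (cd_gate R n) :=
  map (fun i => CNOT R (lift ord0 i) ord0) l.

(* conjugating [diag(1, z)] on qubit 0 by CNOTs from the qubits of [S] applies
   the phase [z] exactly when [chi S] holds *)
Definition phase_gadget (S : mask) (z : C) : seq (cd_gate R n) :=
  let ladder := cnots (filter S (enum 'I_n')) in ladder ++ Diag ord0 1 z :: ladder.

Definition gadget_phase (z : mask -> C) (S : mask) (y : basis n) : C :=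
  if chi S y then z S else 1.

Definition parity_phase_circuit (z : mask -> C) : seq (cd_gate R n) :=
  flatten (map (fun S => phase_gadget S (z S)) (enum mask)).

Lemma flip_at0_lift b (y : basis n) j : flip_at ord0 b y (lift ord0 j) = y (lift ord0 j).
Proof. by rewrite ffunE eq_sym (negbTE (neq_lift _ _)). Qed.

Lemma flip_at0_add b1 b2 (y : basis n) :
  flip_at ord0 b2 (flip_at ord0 b1 y) = flip_at ord0 (b1 (+) b2) y.
Proof. by apply/ffunP => k; rewrite !ffunE; case: (k == ord0); rewrite ?ffunE ?addbA. Qed.

Lemma flip_at0_false (y : basis n) : flip_at ord0 false y = y.
Proof. by apply/ffunP => k; rewrite !ffunE addbF; case: (k == ord0). Qed.

Lemma parity_flip_at0 (S : mask) b (y : basis n) : parity S (flip_at ord0 b y) = parity S y.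
Proof. by apply: eq_bigr => j _; rewrite flip_at0_lift. Qed.

Lemma cd_run_cnots (l : seq 'I_n') y :
  cd_run (cnots l) y = flip_at ord0 (\big[addb/false]_(i <- l) y (lift ord0 i)) y.
Proof.
elim: l y => [|i l IH] y; first by rewrite big_nil flip_at0_false.
rewrite [LHS]IH /= flip_at0_add big_cons; congr (flip_at _ (_ (+) _) _).
by apply: eq_bigr => j _; rewrite flip_at0_lift.
Qed.

Lemma cd_circuit_phase_cnots (l : seq 'I_n') y : cd_circuit_phase (cnots l) y = 1.
Proof. by elim: l y => [|i l IH] y //=; rewrite IH mul1r. Qed.

Lemma cd_run_ladder (S : mask) y :
  cd_run (cnots (filter S (enum 'I_n'))) y = flip_at ord0 (parity S y) y.
Proof. by rewrite cd_run_cnots big_filter big_enum_cond. Qed.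

Lemma cd_run_phase_gadget (S : mask) z y : cd_run (phase_gadget S z) y = y.
Proof.
rewrite /phase_gadget cd_run_cat [cd_run (_ :: _) _]/= cd_run_ladder.
by rewrite cd_run_ladder parity_flip_at0 flip_at0_add addbb flip_at0_false.
Qed.

Lemma cd_circuit_phase_gadget (S : mask) z y :
  cd_circuit_phase (phase_gadget S z) y = if chi S y then z else 1.
Proof.
rewrite /phase_gadget cd_circuit_phase_cat /= !cd_circuit_phase_cnots mul1r mulr1.
by rewrite cd_run_ladder /chi ffunE eqxx.
Qed.

Lemma parity_phase_circuitE (z : mask -> C) x y :
  cd_circuit_op (parity_phase_circuit z) x y =
  (x == y)%:R * \prod_S gadget_phase z S y.
Proof.
rewrite cd_circuit_opE /parity_phase_circuit -big_enum; congr (_%:R * _).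
  by elim: (enum mask) => [|S ss IH] //=; rewrite cd_run_cat cd_run_phase_gadget.
elim: (enum mask) y => [|S ss IH] y /=; first by rewrite big_nil.
by rewrite cd_circuit_phase_cat cd_run_phase_gadget cd_circuit_phase_gadget IH big_cons.
Qed.

Lemma parity_phase_circuit_ok (z : mask -> C) : (forall S, `|z S| = 1) ->
  forall g, List.In g (parity_phase_circuit z) -> cd_gate_ok g.
Proof.
have cnots_ok l g : List.In g (cnots l) -> cd_gate_ok g.
  by case/List.in_map_iff => i [<- _] /= eq_i0; have := neq_lift ord0 i; rewrite eq_i0 eqxx.
move=> z1; rewrite /parity_phase_circuit; elim: (enum mask) => [|S ss IH] //= g.
rewrite List.in_app_iff /phase_gadget List.in_app_iff /=.
by case=> [[/cnots_ok|[<-|/cnots_ok]]|/IH] //=; rewrite normr1 z1.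
Qed.

End ParityPhaseCircuit.

Lemma big_addb_toggle (I : finType) (P : pred I) (f : I -> bool) j :
  \big[addb/false]_(i | P i) (f i (+) (i == j)) = (\big[addb/false]_(i | P i) f i) (+) P j.
Proof.
rewrite big_split /=; congr (_ (+) _).
case Pj: (P j); first by rewrite (bigD1 j) //= eqxx big1 ?addbF // => i /andP[_ /negbTE].
by apply: big1 => i Pi; apply/negbTE; apply: contraFN Pj => /eqP <-.
Qed.

Section ParityPhaseInversion.
Variables (R : realType) (n' : nat).
Notation C := R[i].
Notation n := n'.+1.
Notation mask := {ffun 'I_n' -> bool}.
Variable z : mask -> C.
Hypothesis z1 : forall S, `|z S| = 1.

Definition signed_phase (T S : mask) (y : basis n) : C :=
  if chi T y then (gadget_phase z S y)^-1 else gadget_phase z S y.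

Lemma gadget_phase_neq0 S y : gadget_phase z S y != 0.
Proof. by rewrite /gadget_phase; case: chi; rewrite ?oner_neq0 // -normr_eq0 z1 oner_neq0. Qed.

Definition toggle (b : bool) (j : 'I_n') (y : basis n) : basis n :=
  [ffun k => if k == lift ord0 j then ~~ y k else if k == ord0 then y k (+) b else y k].

Lemma toggleK b j : involutive (toggle b j).
Proof.
move=> y; apply/ffunP => k; rewrite !ffunE.
by case: (k == lift ord0 j); [rewrite negbK | case: (k == ord0); rewrite ?addbK].
Qed.

Lemma chi_toggle b j y S : chi S (toggle b j y) = chi S y (+) (b (+) S j).
Proof.
have toggle_lift i : toggle b j y (lift ord0 i) = y (lift ord0 i) (+) (i == j).
  rewrite ffunE (inj_eq (@lift_inj _ ord0)); case: (i =P j) => [->|_]; first by rewrite addbT.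
  by rewrite [lift ord0 i == ord0]eq_sym (negbTE (neq_lift _ _)) addbF.
rewrite /chi ffunE (negbTE (neq_lift _ _)) eqxx /parity.
rewrite (eq_bigr _ (fun i _ => toggle_lift i)) big_addb_toggle.
by rewrite addbACA.
Qed.

(* for [S != T], toggling a coordinate where they differ preserves [chi S]
   and negates [chi T], so the factors cancel in pairs *)
Lemma prod_signed_phase_neq T S : S != T -> \prod_y signed_phase T S y = 1.
Proof.
move=> neqST; have [j Sj] : exists j, S j != T j.
  by apply/existsP; apply: contraNT neqST => /existsPn eqST; apply/eqP/ffunP => j; apply/eqP/negPn.
have chiS y : chi S (toggle (S j) j y) = chi S y by rewrite chi_toggle addbb addbF.
have chiT y : chi T (toggle (S j) j y) = ~~ chi T y.
  by rewrite chi_toggle; move: Sj; case: (S j); case: (T j); case: (chi T y).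
rewrite (bigID (chi T)) /= [X in _ * X](reindex_inj (can_inj (toggleK (S j) j))) /=.
rewrite [X in _ * X](eq_bigl (chi T)) => [|y]; last by rewrite chiT negbK.
rewrite -big_split /=; apply: big1 => y chiTy.
have phaseS : gadget_phase z S (toggle (S j) j y) = gadget_phase z S y.
  by rewrite /gadget_phase chiS.
by rewrite /signed_phase chiT chiTy /= phaseS mulVf ?gadget_phase_neq0.
Qed.

Lemma card_chi T : #|[pred y : basis n | chi T y]| = (2 ^ n')%N.
Proof.
have flip_chi y : chi T (flip_at ord0 true y) = ~~ chi T y.
  by rewrite /chi parity_flip_at0 ffunE eqxx addbT addNb.
have flip_inj : injective (@flip_at n ord0 true).
  by apply: (can_inj (g := @flip_at n ord0 true)) => y; rewrite flip_at0_add flip_at0_false.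
have half : #|[pred y : basis n | chi T y]| = #|[predC [pred y : basis n | chi T y]]|.
  rewrite -!sum1_card (reindex_inj flip_inj) /=; apply: eq_bigl => y.
  by rewrite !inE flip_chi.
have := cardC [pred y : basis n | chi T y].
rewrite card_ffun card_bool card_ord -half addnn expnS mul2n.
exact: double_inj.
Qed.

Lemma prod_signed_phase_diag T : \prod_y signed_phase T T y = (z T ^+ (2 ^ n'))^-1.
Proof.
transitivity (\prod_(y in [pred y : basis n | chi T y]) (z T)^-1).
  rewrite [RHS]big_mkcond; apply: eq_bigr => y _; rewrite /signed_phase /gadget_phase inE.
  by case: (chi T y); rewrite ?invr1.
by rewrite prodr_const card_chi exprVn.
Qed.

(* the diagonal entries [prod_S gadget_phase z S y] have modulus 1, so their
   conjugates are their inverses *)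
Lemma parity_phase_inversion T :
  \prod_y (if chi T y then (\prod_S gadget_phase z S y)^* else \prod_S gadget_phase z S y) =
  (z T ^+ (2 ^ n'))^-1.
Proof.
have conjV y : (\prod_S gadget_phase z S y)^* = (\prod_S gadget_phase z S y)^-1.
  have n1 : `|\prod_S gadget_phase z S y| = 1.
    by rewrite normr_prod; apply: big1 => S _; rewrite /gadget_phase; case: chi; rewrite ?normr1.
  by rewrite invC_norm n1 expr1n invr1 mul1r.
transitivity (\prod_y \prod_S signed_phase T S y).
  by apply: eq_bigr => y _; rewrite conjV /signed_phase; case: (chi T y); rewrite ?prodfV.
rewrite exchange_big (bigD1 T) //= prod_signed_phase_diag big1 ?mulr1 // => S.
exact: prod_signed_phase_neq.
Qed.

End ParityPhaseInversion.

Section CircuitEntries.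
Variables (R : realType) (N : nat).
Notation C := R[i].

Definition gate_entries (g : gate R N) : seq C :=
  match g with
  | Gate1 _ U => [seq U a b | a <- enum 'I_2, b <- enum 'I_2]
  | Gate2 _ _ U => [seq U a b | a <- enum 'I_4, b <- enum 'I_4]
  end.

Definition layer_entries (l : layer R N) : seq C := flatten (map gate_entries l).

Definition circuit_entries (ls : seq (layer R N)) : seq C := flatten (map layer_entries ls).

Section Polynomiality.
Variable P : pred C.

Lemma ratpoly_in_agree_off s (x y : basis N) : ratpoly_in P 0 (agree_off R s x y).
Proof.
rewrite /agree_off big_mkcond /=.
have := @ratpoly_in_prod _ P _ (index_enum 'I_N) (fun=> 0%N)
  (fun k => if k \notin s then (x k == y k)%:R else 1).
by rewrite big1_eq; apply=> k; case: (k \notin s); [exact: ratpoly_in_nat|exact: ratpoly_in1].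
Qed.

Lemma ratpoly_in_gate_op g : {subset gate_entries g <= P} ->
  forall x y, ratpoly_in P 1 (gate_op g x y).
Proof.
move=> gP x y; rewrite -[1%N]/(0 + 1)%N.
case: g gP => [i U|i j U] gP /=; apply: ratpoly_inM; try exact: ratpoly_in_agree_off;
  by apply/ratpoly_in_var/gP/allpairsP; eexists (_, _); rewrite !mem_enum.
Qed.

Lemma ratpoly_in_layer_op l : {subset layer_entries l <= P} ->
  forall x y, ratpoly_in P (size l) (layer_op l x y).
Proof.
elim: l => [|g l IH] lP x y; first exact: ratpoly_in_nat.
rewrite /layer_op /= /opmul -add1n; apply: ratpoly_in_sum => u; apply: ratpoly_inM.
  by apply: ratpoly_in_gate_op => a ag; apply: lP; rewrite /layer_entries /= mem_cat ag.
by apply: IH => a al; apply: lP; rewrite /layer_entries /= mem_cat al orbT.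
Qed.

Lemma ratpoly_in_circuit_op ls : {subset circuit_entries ls <= P} ->
  forall x y, ratpoly_in P (\sum_(l <- ls) size l)%N
    (foldr (@opmul R N) (@opid R N) (map (@layer_op R N) ls) x y).
Proof.
elim: ls => [|l ls IH] lsP x y; first by rewrite big_nil; exact: ratpoly_in_nat.
rewrite /= /opmul big_cons; apply: ratpoly_in_sum => u; apply: ratpoly_inM.
  by apply: ratpoly_in_layer_op => a al; apply: lsP; rewrite /circuit_entries /= mem_cat al.
by apply: IH => a al; apply: lsP; rewrite /circuit_entries /= mem_cat al orbT.
Qed.

End Polynomiality.

Lemma size_circuit_entries ls : (size (circuit_entries ls) <= 16 * \sum_(l <- ls) size l)%N.
Proof.
have size_gate g : (size (gate_entries g) <= 16)%N.
  by case: g => [i U|i j U]; rewrite /= size_allpairs size_enum_ord.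
have size_layer l : (size (layer_entries l) <= 16 * size l)%N.
  elim: l => [|g l IH] //; rewrite /layer_entries /= size_cat mulnS leq_add //.
elim: ls => [|l ls IH]; first by rewrite big_nil.
by rewrite /circuit_entries /= size_cat big_cons mulnDr leq_add.
Qed.

Lemma layer_ok_size (l : layer R N) : layer_ok l -> (size l <= N)%N.
Proof.
move=> [_ supp_uniq].
have le_supp : (size l <= size (flatten (map (@gate_support R N) l)))%N.
  elim: l {supp_uniq} => [|g l IH] //=; rewrite size_cat.
  by case: g => [i U|i j U] /=; rewrite ?add1n ?add2n ltnS // ltnW.
rewrite (leq_trans le_supp) // -(card_uniqP supp_uniq).
by rewrite -[X in (_ <= X)%N](card_ord N) max_card.
Qed.

(* a depth-d circuit has at most [d * N] gates, each with at most 16 entries;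
   closing under conjugation doubles their number *)
Lemma has_depth_circuit_ratpoly d (M : op R N) : has_depth_circuit d M ->
  exists vs : seq C, [/\ uniq vs, (size vs <= 32 * (N * d))%N,
    forall a, a \in vs -> a^* \in vs &
    forall x y, ratpoly_in (mem vs) (d * N) (M x y)].
Proof.
case=> ls [<- [ls_ok ME]]; set es := circuit_entries ls.
have le_gates : (\sum_(l <- ls) size l <= size ls * N)%N.
  elim: ls ls_ok {es ME} => [|l ls IH] ls_ok; first by rewrite big_nil.
  rewrite big_cons /= mulSn leq_add //; first by apply/layer_ok_size/ls_ok; left.
  by apply: IH => l' l'ls; apply: ls_ok; right.
exists (undup (es ++ map (fun a => a^*) es)); split.
- exact: undup_uniq.
- apply: leq_trans (size_undup _) _; rewrite size_cat size_map.
  have := leq_trans (size_circuit_entries ls) (leq_mul (leqnn 16) le_gates).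
  rewrite -/es [(size ls * N)%N]mulnC => les.
  by rewrite -[32%N]/(16 + 16)%N mulnDl leq_add.
- move=> a; rewrite !mem_undup !mem_cat => /orP[ea|/mapP[b eb ->]].
    by rewrite map_f ?orbT.
  by rewrite conjCK eb.
- move=> x y; rewrite ME; apply: ratpoly_in_leq le_gates _; apply: ratpoly_in_circuit_op => a ea.
  by rewrite mem_undup mem_cat ea.
Qed.

End CircuitEntries.

Section Embedding.
Variable R : realType.

Definition pad_ancillae n m (y : basis n) : basis (n + m) :=
  [ffun k => if split k is inl i then y i else false].

Lemma embeds_diag n m (F : op R n) (M : op R (n + m)) :
  embeds F M -> forall y, M (pad_ancillae m y) (pad_ancillae m y) = F y y.
Proof.
move=> FM y; set y0 := pad_ancillae m y.
have y0_data : [ffun i => y0 (lshift m i)] = y.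
  by apply/ffunP => i; rewrite !ffunE (unsplitK (inl _ i)).
have y0_anc j : y0 (rshift n j) = false by rewrite ffunE (unsplitK (inr _ j)).
pose e_y : vec R n := fun u => (u == y)%:R.
have e_y0 u : @with_ancillae R n m e_y u = (u == y0)%:R.
  rewrite /with_ancillae /e_y /=; have [->|neq_u] := eqVneq u y0.
    by rewrite y0_data eqxx mul1r big1 // => j _; rewrite y0_anc.
  case: eqP => [u_data|_]; last by rewrite mul0r.
  have [j uj] : exists j, u (rshift n j).
    apply/existsP; apply: contraNT neq_u => /existsPn u_anc; apply/eqP/ffunP => k.
    rewrite -(splitK k); case: (split k) => [i|j] /=.
      by rewrite [RHS]ffunE (unsplitK (inl _ i)) -u_data ffunE.
    by rewrite y0_anc; apply/negbTE.
  by rewrite (bigD1 j) //= uj mul0r mulr0.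
have := FM e_y y0; rewrite /opapp (eq_bigr _ (fun u _ => congr1 _ (e_y0 u))).
rewrite (bigD1 y0) //= eqxx mulr1 big1 ?addr0 => [->|u /negbTE ->]; last by rewrite mulr0.
rewrite /with_ancillae y0_data [X in _ * X]big1 ?mulr1 => [|j _]; last by rewrite y0_anc.
rewrite (bigD1 y) //= /e_y eqxx mulr1 big1 ?addr0 // => u /negbTE ->.
by rewrite mulr0.
Qed.

End Embedding.

Section DepthBound.
Variables (R : realType) (n' : nat).
Notation C := R[i].
Notation n := n'.+1.
Notation mask := {ffun 'I_n' -> bool}.

Definition root_phases (w : 'I_#|mask| -> C) (S : mask) : C :=
  (2 ^ n')%N.-root (w (enum_rank S))^-1.

Variable w : 'I_#|mask| -> C.
Hypothesis w1 : forall i, `|w i| = 1.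

Lemma root_phases_norm S : `|root_phases w S| = 1.
Proof. by rewrite norm_rootC normfV w1 invr1 rootC1 // expn_gt0. Qed.

Lemma root_phasesX S : root_phases w S ^+ (2 ^ n') = (w (enum_rank S))^-1.
Proof. by rewrite rootCK // expn_gt0. Qed.

Lemma parity_phase_depth_bound m d (M : op R (n + m)) :
  alg_independent w -> has_depth_circuit d M ->
  embeds (cd_circuit_op (parity_phase_circuit (root_phases w))) M ->
  (2 ^ n' <= 32 * ((n + m) * d))%N.
Proof.
move=> w_indep /has_depth_circuit_ratpoly[vs [vs_uniq size_vs vs_conj ME]] embM.
pose diagM y := M (pad_ancillae m y) (pad_ancillae m y).
have diagME y : diagM y = \prod_S gadget_phase (root_phases w) S y.
  by rewrite /diagM (embeds_diag embM) parity_phase_circuitE eqxx mul1r.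
have wE T : w (enum_rank T) = \prod_y (if chi T y then (diagM y)^* else diagM y).
  under eq_bigr do rewrite diagME.
  by rewrite parity_phase_inversion ?root_phasesX ?invrK //; exact: root_phases_norm.
have w_ratpoly i : ratpoly_in (mem vs) (#|basis n| * (d * (n + m))) (w i).
  rewrite -(enum_valK i) wE -sum_nat_const; apply: ratpoly_in_prod => y.
  by case: chi; [apply: (ratpoly_in_rmorph (f := Num.conj)) | ]; rewrite /diagM.
have := alg_independent_card vs_uniq w_indep w_ratpoly.
by rewrite card_ffun card_bool card_ord => /leq_trans; apply.
Qed.

End DepthBound.

Theorem corollary1 (R : realType) :
  exists C : forall n : nat, seq (cd_gate R n),
    (forall n g, List.In g (C n) -> cd_gate_ok g) /\
    forall p : {poly R}, exists q : {poly R},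
      forall n : nat, (0 < n)%N ->
        0 < q.[n%:R] /\
        forall (m d : nat) (M : op R (n + m)),
          m%:R <= p.[n%:R] ->
          has_depth_circuit d M ->
          embeds (cd_circuit_op (C n)) M ->
          2 ^+ n / q.[n%:R] <= d%:R.
Proof.
have W n' := cid2 (exists_alg_independent_unit R #|{ffun 'I_n' -> bool}|).
exists (fun n => if n is n'.+1 then parity_phase_circuit (root_phases (s2val (W n'))) else [::]).
split=> [[|n'] g //|p].
  move=> g_in; apply: parity_phase_circuit_ok g_in => S.
  by apply: root_phases_norm => i; exact: (s2valP (W n') i).
exists (64%:R *: ('X + p * p + 1)) => -[|n'] // _; rewrite hornerZ !hornerE.
have q_pos : 0 < 64%:R * ((n'.+1)%:R + p.[(n'.+1)%:R] * p.[(n'.+1)%:R] + 1) :> R.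
  by have := ler0n R n'.+1; nra.
split=> // m d M le_m depthM embM; rewrite ler_pdivrMr //.
have := parity_phase_depth_bound (s2valP (W n')) (s2valP' (W n')) depthM embM.
rewrite -(ler_nat R) natrM natrX natrM natrD => le_exp.
rewrite exprS; apply: le_trans (ler_wpM2l (ler0n _ 2) le_exp) _.
have le_m2 : m%:R <= p.[(n'.+1)%:R] * p.[(n'.+1)%:R] + 1 :> R by nra.
have d0 : 0 <= d%:R :> R := ler0n _ d.
nra.
Qed.
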